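(* Consider standard (linear-kernel) $k$-means on $\mathbb{R}$. For every $m\in\mathbb{N}$ there exist $k\in\mathbb{N}$ and a finite dataset $X\subset\mathbb{R}$ such that: the price of explainability of $X$ is $p(X)=1$; the tree produced by IMM (with reference clustering an optimal $k$-means clustering of $X$) attains $p(T_{IMM},X)=1$; but ExKMC initialized on the empty tree and run until the tree has $k$ leaves constructs a decision tree $T$ with $p(T,X)\ge m$.
   Context: $k$-means cost of a partition $C_1,\dots,C_k$ of $X$: $\sum_l\sum_{x\in C_l}\|x-c_l\|^2$ with $c_l$ the mean of $C_l$; $\mathrm{cost}_{opt}(X)$ is its minimum. The reference clustering is an optimal $k$-means partition with centers $c_1,\dots,c_k$ (its means); for $x\in X$, $c(x)$ is the center of its cluster. For a decision tree $T$ whose $k$ leaves partition $X$, $\mathrm{cost}(T,X)$ is the $k$-means cost of the leaf partition and $p(T,X)=\mathrm{cost}(T,X)/\mathrm{cost}_{opt}(X)$; $p(X)=\min_T p(T,X)$ over interpretable decision trees with $k$ leaves, i.e. trees where each internal node splits its data $X^u$ into $\{x\in X^u:x_i\in[\theta_1,\theta_2]\}$ and its complement for some coordinate $i$ and reals $\theta_1<\theta_2$. IMM: build a tree top-down; each node $u$ holds points $X^u$ and centers $\mathcal{M}^u$ (root: all). If $|\mathcal{M}^u|=1$, $u$ is a leaf; otherwise choose, among threshold cuts $x_i\le\theta$ splitting $\mathcal{M}^u$ into two nonempty parts, one minimizing the number of mistakes (points $x\in X^u$ with $c(x)\in\mathcal{M}^u$ lying on the opposite side of the cut from $c(x)$),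 and pass points and centers to the children accordingly. ExKMC: start with one leaf containing $X$. While the number of leaves is less than $k$: for each leaf $u$ (data $X^u$) and each cut $(i,\theta)$ with $X^u_L=\{x\in X^u:x_i\le\theta\}$, $X^u_R=\{x\in X^u:x_i>\theta\}$, let $\mathrm{cost}_{exkmc}(u,i,\theta)=\min_{j,l\in[k]}\big(\sum_{x\in X^u_L}\|x-c_j\|^2+\sum_{x\in X^u_R}\|x-c_l\|^2\big)$; choose the leaf and cut maximizing $\min_{j\in[k]}\sum_{x\in X^u}\|x-c_j\|^2-\mathrm{cost}_{exkmc}(u,i,\theta)$, and replace that leaf by its two children $X^u_L,X^u_R$. *)

From HB Require Import structures.
From mathcomp Require Import all_boot all_order all_algebra.
From mathcomp Require Import reals.
Set Implicit Arguments. Unset Strict Implicit. Unset Printing Implicit Defensive.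
Import Order.TTheory GRing.Theory Num.Theory.
Local Open Scope ring_scope.

Section KMeans1D.
Variable R : realType.

Definition mean (s : seq R) : R := (\sum_(x <- s) x) / (size s)%:R.
Definition cluster_cost (s : seq R) : R := \sum_(x <- s) (x - mean s) ^+ 2.
Definition part_cost (P : seq (seq R)) : R := \sum_(C <- P) cluster_cost C.

Definition clusters (k : nat) (X : seq R) (lab : R -> 'I_k) : seq (seq R) :=
  [seq [seq x <- X | lab x == i] | i <- enum 'I_k].
Definition nonempty_clusters (k : nat) (X : seq R) (lab : R -> 'I_k) : Prop :=
  forall i : 'I_k, has (fun x => lab x == i) X.
Definition kmeans_cost (k : nat) (X : seq R) (lab : R -> 'I_k) : R :=
  part_cost (clusters X lab).

Definition is_cost_opt (k : nat) (X : seq R) (c : R) : Prop :=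
  (exists lab : R -> 'I_k, nonempty_clusters X lab /\ kmeans_cost X lab = c) /\
  (forall lab : R -> 'I_k, nonempty_clusters X lab -> c <= kmeans_cost X lab).

Definition is_opt_clustering (k : nat) (X : seq R) (lab : R -> 'I_k) : Prop :=
  nonempty_clusters X lab /\
  (forall lab' : R -> 'I_k, nonempty_clusters X lab' ->
     kmeans_cost X lab <= kmeans_cost X lab').

Definition centers (k : nat) (X : seq R) (lab : R -> 'I_k) (i : 'I_k) : R :=
  mean [seq x <- X | lab x == i].

(** Interpretable decision trees on R: an internal node splits its data into
    {x | a <= x <= b} (first child) and its complement (second child), a < b. *)
Inductive itree : Type :=
| Leaf : itree
| Node : R -> R -> itree -> itree -> itree.

Fixpoint itree_wf (T : itree) : Prop :=
  match T with
  | Leaf => True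
  | Node a b T1 T2 => a < b /\ itree_wf T1 /\ itree_wf T2
  end.

Fixpoint nleaves (T : itree) : nat :=
  match T with
  | Leaf => 1
  | Node _ _ T1 T2 => nleaves T1 + nleaves T2
  end.

Fixpoint leaf_part (T : itree) (X : seq R) : seq (seq R) :=
  match T with
  | Leaf => [:: X]
  | Node a b T1 T2 =>
      leaf_part T1 [seq x <- X | a <= x <= b] ++
      leaf_part T2 [seq x <- X | ~~ (a <= x <= b)]
  end.

Definition tree_cost (T : itree) (X : seq R) : R := part_cost (leaf_part T X).

Definition price_tree (copt : R) (T : itree) (X : seq R) : R := tree_cost T X / copt.

Definition price_is (k : nat) (X : seq R) (copt v : R) : Prop :=
  (exists T, itree_wf T /\ nleaves T = k /\ price_tree copt T X = v) /\
  (forall T, itree_wf T -> nleaves T = k -> v <= price_tree copt T X).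

Section IMM.
Variables (k : nat) (c : 'I_k -> R) (lab : R -> 'I_k).

Definition imm_valid (Mu : seq 'I_k) (th : R) : bool :=
  has (fun i => c i <= th) Mu && has (fun i => ~~ (c i <= th)) Mu.

Definition imm_mistakes (Xu : seq R) (Mu : seq 'I_k) (th : R) : nat :=
  count (fun x => (lab x \in Mu) && ((x <= th) != (c (lab x) <= th))) Xu.

(** imm_run Xu Mu P : some execution of IMM from a node holding points Xu and
    centers Mu produces a subtree whose leaves partition Xu as P. *)
Inductive imm_run : seq R -> seq 'I_k -> seq (seq R) -> Prop :=
| imm_leaf Xu Mu : size Mu = 1%N -> imm_run Xu Mu [:: Xu]
| imm_node Xu Mu th PL PR :
    (1 < size Mu)%N ->
    imm_valid Mu th ->
    (forall th', imm_valid Mu th' ->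
       (imm_mistakes Xu Mu th <= imm_mistakes Xu Mu th')%N) ->
    imm_run [seq x <- Xu | x <= th] [seq i <- Mu | c i <= th] PL ->
    imm_run [seq x <- Xu | ~~ (x <= th)] [seq i <- Mu | ~~ (c i <= th)] PR ->
    imm_run Xu Mu (PL ++ PR).
End IMM.

Section ExKMC.
Variables (k : nat) (c : 'I_k -> R).

Definition seqmin (s : seq R) : R := foldr Order.min (head 0 s) s.

Definition sqdist_sum (s : seq R) (a : R) : R := \sum_(x <- s) (x - a) ^+ 2.

Definition cost_exkmc (Xu : seq R) (th : R) : R :=
  seqmin [seq sqdist_sum [seq x <- Xu | x <= th] (c j) +
              sqdist_sum [seq x <- Xu | ~~ (x <= th)] (c l)
         | j <- enum 'I_k, l <- enum 'I_k].

Definition exkmc_gain (Xu : seq R) (th : R) : R :=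
  seqmin [seq sqdist_sum Xu (c j) | j <- enum 'I_k] - cost_exkmc Xu th.

(** exkmc_run L F : starting from leaves L (list of data sets), some execution
    of ExKMC (splitting until there are k leaves) ends with leaves F. *)
Inductive exkmc_run : seq (seq R) -> seq (seq R) -> Prop :=
| exkmc_stop L : ~ (size L < k)%N -> exkmc_run L L
| exkmc_step L u th F :
    (size L < k)%N ->
    (u < size L)%N ->
    (forall u' th', (u' < size L)%N ->
       exkmc_gain (nth [::] L u') th' <= exkmc_gain (nth [::] L u) th) ->
    exkmc_run (take u L ++
               [:: [seq x <- nth [::] L u | x <= th];
                   [seq x <- nth [::] L u | ~~ (x <= th)]] ++ drop u.+1 L) F ->
    exkmc_run L F.
End ExKMC.

End KMeans1D.

(* Take k = 5 and X = {-2N, -N, -1, 1, N, 2N} with N = m + 4.  Any two points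
   of X are at distance at least 2, and at least N - 1 unless they are -1 and 1,
   so the optimal clustering merges exactly -1 and 1, at cost 2, and every
   partition of X into 5 blocks (in particular every tree with 5 leaves) costs at
   least 2.  The clusters are intervals, so a threshold tree recovers them, and
   IMM always finds cuts without mistakes and recovers them too.  ExKMC instead
   scores its first cut against the fixed reference centers -2N, -N, 0, N, 2N:
   every cut that keeps -1 and 1 together is worse than the cut at 0, so the first
   cut separates -1 from 1.  They are never reunited, so some leaf of the final
   5-leaf tree holds two points at distance at least N - 1, and the tree costs at
   least (N - 1)^2 / 2 >= 2 m. *)

From HB Require Import structures.
From mathcomp Require Import all_boot all_order all_algebra.
From mathcomp Require Import reals.
From mathcomp Require Import lra zify.
Import Order.TTheory GRing.Theory Num.Theory.
Local Open Scope ring_scope.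
Set Implicit Arguments. Unset Strict Implicit. Unset Printing Implicit Defensive.

Section Pigeonhole.
Variable T : eqType.

Lemma size_flatten_le (P : seq (seq T)) :
  all (fun C => size C <= 1)%N P -> (size (flatten P) <= size P)%N.
Proof.
elim: P => //= C P IH /andP[szC /IH]; rewrite size_cat; lia.
Qed.

Lemma uniq_flatten_mem (P : seq (seq T)) C :
  uniq (flatten P) -> C \in P -> uniq C.
Proof.
elim: P => //= D P IH; rewrite cat_uniq => /and3P[uD _ uP].
by rewrite inE => /predU1P[->|/IH]; last exact.
Qed.

Lemma partition_has_pair (X : seq T) (P : seq (seq T)) :
  uniq X -> perm_eq (flatten P) X -> (size P < size X)%N ->
  exists2 C, C \in P & exists x y, [/\ x \in C, y \in C & x != y].
Proof.
move=> uX pP ltPX.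
have /hasP[[|x [|y C]] PC //= _] : has (fun C => 1 < size C)%N P.
  apply: contraTT ltPX => /hasPn small; rewrite -leqNgt -(perm_size pP).
  by apply/size_flatten_le/allP => C /small; rewrite -leqNgt.
have uP : uniq (flatten P) by rewrite (perm_uniq pP).
have /= /andP[] := uniq_flatten_mem uP PC.
rewrite inE negb_or => /andP[neq_xy _] _.
by exists [:: x, y & C] => //; exists x, y; rewrite !inE !eqxx orbT.
Qed.

Lemma labelling_has_pair (S : finType) (X : seq T) (lab : T -> S) :
  uniq X -> (#|S| < size X)%N ->
  exists x y, [/\ x \in X, y \in X, x != y & lab x = lab y].
Proof.
move=> uX ltSX.
have /hasP[x Xx /hasP[y Xy /andP[neq_xy /eqP]]] :
    has (fun x => has (fun y => (x != y) && (lab x == lab y)) X) X.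
  apply: contraTT ltSX => /hasPn inj; rewrite -leqNgt -(size_map lab) cardE.
  apply: (@uniq_leq_size _ _ (enum S)) => [|i _]; last by rewrite mem_enum.
  rewrite map_inj_in_uniq // => x y Xx Xy eq_lab; apply/eqP.
  by move: (inj x Xx) => /hasPn /(_ y Xy); rewrite eq_lab eqxx andbT negbK.
by exists x, y.
Qed.
End Pigeonhole.

Section KMeansCost.
Variable R : realType.
Implicit Types (s X C : seq R) (P : seq (seq R)) (a x y : R).

Lemma sqdist_sum_ge0 s a : 0 <= sqdist_sum s a.
Proof. by apply: sumr_ge0 => x _; apply: sqr_ge0. Qed.

Lemma sqdist_sum_ge_pair s a x y :
  x \in s -> y \in s -> x != y -> (x - y) ^+ 2 / 2 <= sqdist_sum s a.
Proof.
move=> sx sy neq_xy; rewrite /sqdist_sum (big_rem x sx) /=.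
have sy' : y \in rem x s by rewrite (rem_mem _ sy) // eq_sym.
rewrite (big_rem y sy') /=.
have := sqdist_sum_ge0 (rem y (rem x s)) a; rewrite /sqdist_sum.
have := sqr_ge0 (x + y - 2 * a); nra.
Qed.

Lemma cluster_cost_ge0 C : 0 <= cluster_cost C.
Proof. exact: sqdist_sum_ge0. Qed.

Lemma part_cost_ge_pair P C x y :
  C \in P -> x \in C -> y \in C -> x != y -> (x - y) ^+ 2 / 2 <= part_cost P.
Proof.
move=> PC Cx Cy neq_xy; apply: le_trans (sqdist_sum_ge_pair (mean C) Cx Cy neq_xy) _.
rewrite /part_cost (big_rem C PC) /= lerDl.
by apply: sumr_ge0 => D _; apply: cluster_cost_ge0.
Qed.

Lemma kmeans_cost_ge_pair k X (lab : R -> 'I_k) x y :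
  x \in X -> y \in X -> x != y -> lab x = lab y ->
  (x - y) ^+ 2 / 2 <= kmeans_cost X lab.
Proof.
move=> Xx Xy neq_xy eq_lab; apply: (@part_cost_ge_pair _ [seq z <- X | lab z == lab x]).
- by apply: map_f; rewrite mem_enum.
- by rewrite mem_filter eqxx Xx.
- by rewrite mem_filter eq_lab eqxx Xy.
- exact: neq_xy.
Qed.

Lemma kmeans_costE k X (lab : R -> 'I_k) :
  kmeans_cost X lab = \sum_(x <- X) (x - centers X lab (lab x)) ^+ 2.
Proof.
rewrite /kmeans_cost /part_cost /clusters big_map.
transitivity (\sum_(i <- enum 'I_k) \sum_(x <- X)
    (if lab x == i then (x - centers X lab (lab x)) ^+ 2 else 0)).
  apply: eq_bigr => i _; rewrite /cluster_cost big_filter big_mkcond.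
  by apply: eq_bigr => x _; case: eqP => // <-.
rewrite exchange_big; apply: eq_bigr => x _.
by rewrite -big_mkcond big_enum_cond /= (big_pred1 (lab x)) // => i; rewrite eq_sym.
Qed.

Lemma leaf_part_perm (T : itree R) X : perm_eq (flatten (leaf_part T X)) X.
Proof.
elim: T X => [|a b T1 IH1 T2 IH2] X /=; first by rewrite cats0.
by rewrite flatten_cat (perm_trans (perm_cat (IH1 _) (IH2 _))) ?perm_filterC.
Qed.

Lemma size_leaf_part (T : itree R) X : size (leaf_part T X) = nleaves T.
Proof. by elim: T X => //= a b T1 IH1 T2 IH2 X; rewrite size_cat IH1 IH2. Qed.

Lemma mean_seq1 x : mean [:: x] = x.
Proof. by rewrite /mean big_seq1 divr1. Qed.

Lemma cluster_cost_seq1 x : cluster_cost [:: x] = 0.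
Proof. by rewrite /cluster_cost mean_seq1 big_seq1 subrr expr0n. Qed.

Lemma cluster_cost_pair x y : cluster_cost [:: x; y] = (x - y) ^+ 2 / 2.
Proof. by rewrite /cluster_cost /mean !big_cons !big_nil /=; lra. Qed.

End KMeansCost.

Section SeqExtrema.
Variable R : realType.

Lemma seqmin_le (s : seq R) x : x \in s -> seqmin s <= x.
Proof.
rewrite /seqmin; elim: s (head 0 s) => //= y s IH d.
by rewrite inE ge_min => /predU1P[->|/IH ->]; rewrite ?lexx ?orbT.
Qed.

Lemma foldr_min_mem (d : R) s : foldr Order.min d s \in d :: s.
Proof.
elim: s => [|y s IH] /=; first exact: mem_head.
rewrite minEle !inE; case: ifP => _; rewrite ?eqxx ?orbT //.
by move: IH; rewrite inE => /orP[]->; rewrite ?orbT.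
Qed.

Lemma seqmin_mem (s : seq R) x : x \in s -> seqmin s \in s.
Proof.
case: s => // y s _; have := foldr_min_mem y (y :: s); rewrite /seqmin /=.
by rewrite inE => /predU1P[->|//]; apply: mem_head.
Qed.

Lemma seq_argmax (T : eqType) (s : seq T) (f : T -> R) :
  s != [::] -> exists2 e, e \in s & forall e', e' \in s -> f e' <= f e.
Proof.
elim: s => //= a s IH _; have [-> | /IH[e se max_e]] := eqVneq s [::].
  by exists a; rewrite ?mem_head // => e'; rewrite inE => /eqP->.
have [le_ea | lt_ae] := leP (f e) (f a).
- exists a; rewrite ?mem_head // => e'; rewrite inE => /predU1P[->//|/max_e].
  by move/le_trans; apply.
- exists e; rewrite ?inE ?se ?orbT // => e'; rewrite inE => /predU1P[->|/max_e//].
  exact: ltW.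
Qed.

Lemma seqmin_gt (s : seq R) b :
  s != [::] -> {in s, forall x, b < x} -> b < seqmin s.
Proof. by case: s => // x s _ gt_b; apply/gt_b/(seqmin_mem (mem_head x s)). Qed.

End SeqExtrema.

Section ExKMCRuns.
Variables (R : realType) (k : nat) (c : 'I_k -> R).
Implicit Types (Xu : seq R) (L F : seq (seq R)) (th t : R).

Definition split_leaf L u th : seq (seq R) :=
  take u L ++ [:: [seq x <- nth [::] L u | x <= th];
                  [seq x <- nth [::] L u | ~~ (x <= th)]] ++ drop u.+1 L.

Lemma size_split_leaf L u th :
  (u < size L)%N -> size (split_leaf L u th) = (size L).+1.
Proof. by move=> ltuL; rewrite !size_cat size_takel ?size_drop 1?ltnW //=; lia. Qed.

Lemma perm_split_leaf L u th :
  (u < size L)%N -> perm_eq (flatten (split_leaf L u th)) (flatten L).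
Proof.
move=> ltuL; rewrite -[in flatten L](cat_take_drop u L) (drop_nth [::] ltuL).
by rewrite !flatten_cat perm_cat2l /= catA cats0 perm_cat2r perm_filterC.
Qed.

Lemma exkmc_gain_eq_in Xu th t :
  {in Xu, forall x, (x <= th) = (x <= t)} -> exkmc_gain c Xu th = exkmc_gain c Xu t.
Proof.
move=> same_side; rewrite /exkmc_gain /cost_exkmc.
rewrite (@eq_in_filter _ (fun x => x <= th) (fun x => x <= t)) //.
by rewrite (@eq_in_filter _ (fun x => ~~ (x <= th)) (fun x => ~~ (x <= t))) // => x /same_side ->.
Qed.

(* A cut is determined by the points it puts on the left, so besides the data
   points themselves only one threshold below all of them matters. *)
Definition split_candidates Xu : seq R := (seqmin Xu - 1) :: Xu.

Lemma exkmc_gain_candidate Xu th :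
  exists2 t, t \in split_candidates Xu & exkmc_gain c Xu th = exkmc_gain c Xu t.
Proof.
have [/hasP[x0 Xx0 le_x0th] | /hasPn gt_th] := boolP (has (fun x => x <= th) Xu).
- have [|t] := seq_argmax id (s := [seq x <- Xu | x <= th]).
    by rewrite -size_eq0 size_filter -lt0n -has_count; apply/hasP; exists x0.
  rewrite mem_filter => /andP[le_tth Xt] max_t.
  exists t; first by rewrite inE Xt orbT.
  apply: exkmc_gain_eq_in => x Xx; apply/idP/idP => [le_xth | /le_trans]; last exact.
  by apply: max_t; rewrite mem_filter le_xth Xx.
- exists (seqmin Xu - 1); first exact: mem_head.
  apply: exkmc_gain_eq_in => x Xx; rewrite (negbTE (gt_th x Xx)).
  by have := seqmin_le Xx; symmetry; apply/negbTE; rewrite -ltNge; lra.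
Qed.

Lemma exkmc_best_split L : (0 < size L)%N ->
  exists u th, (u < size L)%N /\
    forall u' th', (u' < size L)%N ->
      exkmc_gain c (nth [::] L u') th' <= exkmc_gain c (nth [::] L u) th.
Proof.
move=> L_gt0.
pose cuts := [seq (u, t) | u <- iota 0 (size L), t <- split_candidates (nth [::] L u)].
have cutsP u t : (u \in iota 0 (size L)) -> t \in split_candidates (nth [::] L u) ->
    (u, t) \in cuts by move=> *; apply/allpairsPdep; exists u, t.
have [|[u t]] := seq_argmax (fun p => exkmc_gain c (nth [::] L p.1) p.2) (s := cuts).
  have : (0%N, seqmin (nth [::] L 0) - 1) \in cuts.
    by apply: cutsP; rewrite ?mem_iota ?mem_head.
  by case: (cuts).
case/allpairsPdep => u0 [t0 [+ _ [-> ->]]]; rewrite mem_iota => /= ltuL max_ut.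
exists u0, t0; split=> // u' th' ltu'L.
have [t' cand_t' ->] := exkmc_gain_candidate (nth [::] L u') th'.
by apply: (max_ut (u', t')); apply: cutsP; rewrite // mem_iota.
Qed.

Lemma exkmc_run_exists L : (0 < size L)%N -> exists F, exkmc_run c L F.
Proof.
move: {2}(k - size L)%N (leqnn (k - size L)) => n; elim: n L => [|n IH] L le_kL L_gt0.
  by exists L; apply: exkmc_stop; lia.
have [ltLk | ?] := ltnP (size L) k; last by exists L; apply: exkmc_stop; lia.
have [u [th [ltuL max_uth]]] := exkmc_best_split L_gt0.
have [F runF] : exists F, exkmc_run c (split_leaf L u th) F.
  by apply: IH; rewrite size_split_leaf //; lia.
by exists F; apply: exkmc_step runF.
Qed.

Lemma exkmc_run_size L F : exkmc_run c L F -> (size L <= k)%N -> size F = k.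
Proof.
elim=> {L F} [L ? ? | L u th F ltLk ltuL _ _ IH _]; first lia.
by apply: IH; rewrite size_split_leaf.
Qed.

Lemma exkmc_run_perm L F : exkmc_run c L F -> perm_eq (flatten F) (flatten L).
Proof.
elim=> {L F} // L u th F _ ltuL _ _ IH.
exact: perm_trans IH (perm_split_leaf _ ltuL).
Qed.

Lemma exkmc_run_all (P : pred (seq R)) L F :
  (forall C (a : pred R), P C -> P [seq x <- C | a x]) ->
  exkmc_run c L F -> all P L -> all P F.
Proof.
move=> P_filter; elim=> {L F} // L u th F _ ltuL _ _ IH allL; apply: IH.
move: allL; rewrite -[L in all _ L](cat_take_drop u) (drop_nth [::] ltuL).
by rewrite /split_leaf !all_cat /= => /and3P[-> PLu ->]; rewrite !P_filter.
Qed.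

Lemma exkmc_run_first_split X F : (1 < k)%N -> exkmc_run c [:: X] F ->
  exists2 th, (forall th', exkmc_gain c X th' <= exkmc_gain c X th) &
    exkmc_run c [:: [seq x <- X | x <= th]; [seq x <- X | ~~ (x <= th)]] F.
Proof.
move=> lt1k run.
inversion run as [L not_ltk | L u th F' _ ltu1 max_uth runF']; subst; first by case: not_ltk.
move: ltu1 max_uth runF'; rewrite ltnS leqn0 => /eqP-> max_th runF.
by exists th => // th'; apply: (max_th 0%N).
Qed.

Lemma exkmc_run_partition X F : exkmc_run c [:: X] F -> perm_eq (flatten F) X.
Proof. by move/exkmc_run_perm; rewrite /= cats0. Qed.

End ExKMCRuns.

Section IMMCleanCuts.
Variables (R : realType) (k : nat) (c : 'I_k -> R) (lab : R -> 'I_k) (X : seq R).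
Implicit Types (Xu : seq R) (Mu : seq 'I_k) (th : R).

Definition cut_respects Xu Mu th : Prop :=
  {in Xu, forall x, lab x \in Mu -> (x <= th) = (c (lab x) <= th)}.

Lemma imm_mistakes_eq0 Xu Mu th :
  imm_mistakes c lab Xu Mu th = 0%N <-> cut_respects Xu Mu th.
Proof.
rewrite /imm_mistakes; split => [/eqP | respects].
  rewrite eqn0Ngt -has_count => /hasPn no_mistake x Xu_x Mu_x.
  by apply/eqP; move: (no_mistake x Xu_x); rewrite Mu_x negbK.
apply/eqP; rewrite eqn0Ngt -has_count; apply/hasPn => x Xu_x.
by apply/nandP; case: (boolP (lab x \in Mu)) => Mu_x; [right; rewrite respects ?eqxx | left].
Qed.

Hypothesis clean_cut_exists : forall Mu, uniq Mu -> (1 < size Mu)%N ->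
  exists2 th, imm_valid c Mu th & cut_respects X Mu th.

Lemma imm_best_cut_respects Xu Mu th :
  uniq Mu -> (1 < size Mu)%N -> {subset Xu <= X} ->
  (forall th', imm_valid c Mu th' ->
     (imm_mistakes c lab Xu Mu th <= imm_mistakes c lab Xu Mu th')%N) ->
  cut_respects Xu Mu th.
Proof.
move=> uMu szMu subX min_th; apply/imm_mistakes_eq0/eqP; rewrite -leqn0.
have [th' valid' clean'] := clean_cut_exists uMu szMu.
have /imm_mistakes_eq0 <- : cut_respects Xu Mu th' by move=> x /subX; apply: clean'.
exact: min_th.
Qed.

Lemma imm_run_exists Xu Mu : {subset Xu <= X} -> uniq Mu -> (0 < size Mu)%N ->
  exists P, imm_run c lab Xu Mu P.
Proof.
elim: {Mu}(size Mu).+1 {-2}Mu (ltnSn (size Mu)) Xu => // n IH Mu szMu Xu subX uMu Mu_gt0.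
have [le1 | lt1] := leqP (size Mu) 1; first by exists [:: Xu]; apply: imm_leaf; lia.
have [th valid clean] := clean_cut_exists uMu lt1.
have /andP[] := valid; rewrite !has_count => left_gt0 right_gt0.
have split_size : (count (fun i => c i <= th)%R Mu +
    count (fun i => ~~ (c i <= th))%R Mu)%N = size Mu by apply: count_predC.
have [PL runL] : exists PL, imm_run c lab [seq x <- Xu | x <= th]
    [seq i <- Mu | c i <= th] PL.
  apply: IH; rewrite ?size_filter ?filter_uniq //; first lia.
  by move=> x; rewrite mem_filter => /andP[_ /subX].
have [PR runR] : exists PR, imm_run c lab [seq x <- Xu | ~~ (x <= th)]
    [seq i <- Mu | ~~ (c i <= th)] PR.
  apply: IH; rewrite ?size_filter ?filter_uniq //; first lia.
  by move=> x; rewrite mem_filter => /andP[_ /subX].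
exists (PL ++ PR); apply: imm_node runL runR => // th' _.
suff -> : imm_mistakes c lab Xu Mu th = 0%N by [].
by apply/imm_mistakes_eq0 => x /subX; apply: clean.
Qed.

Lemma imm_run_cost Mu P :
  imm_run c lab [seq x <- X | lab x \in Mu] Mu P -> uniq Mu ->
  part_cost P = \sum_(i <- Mu) cluster_cost [seq x <- X | lab x == i].
Proof.
move: {-1}[seq x <- X | lab x \in Mu] (erefl [seq x <- X | lab x \in Mu]) => Xu XuE run.
elim: run XuE => {Xu Mu P} [Xu Mu szMu | Xu Mu th PL PR lt1 _ min_th _ IHL _ IHR] XuE uMu.
  case: Mu szMu XuE {uMu} => [|i []] // _ XuE.
  rewrite /part_cost !big_seq1 -XuE; congr cluster_cost.
  by apply: eq_filter => x; rewrite inE.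
have subX : {subset Xu <= X} by move=> x; rewrite -XuE mem_filter => /andP[].
have respects := imm_best_cut_respects uMu lt1 subX min_th.
have side_filter (a : pred R) (b : pred 'I_k) :
    {in X, forall x, lab x \in Mu -> a x = b (lab x)} ->
    [seq x <- X | lab x \in [seq i <- Mu | b i]] = [seq x <- Xu | a x].
  move=> ab; rewrite -XuE -filter_predI; apply: eq_in_filter => x Xx /=.
  rewrite mem_filter; case: (boolP (lab x \in Mu)) => Mx; last by rewrite !andbF.
  by rewrite !andbT ab.
have respects_X : {in X, forall x, lab x \in Mu -> (x <= th) = (c (lab x) <= th)}.
  by move=> x Xx Mx; apply: respects; rewrite // -XuE mem_filter Mx.
have XL := side_filter (fun x => x <= th) (fun i => c i <= th) respects_X.
have XR := side_filter (fun x => ~~ (x <= th)) (fun i => ~~ (c i <= th))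
  (fun x Xx Mx => congr1 negb (respects_X x Xx Mx)).
rewrite /part_cost big_cat -!/(part_cost _) IHL ?IHR ?filter_uniq //.
by rewrite [RHS](bigID (fun i => c i <= th)) !big_filter.
Qed.

Lemma imm_run_kmeans_cost P :
  imm_run c lab X (enum 'I_k) P -> part_cost P = kmeans_cost X lab.
Proof.
have XE : [seq x <- X | lab x \in enum 'I_k] = X.
  by apply/all_filterP/allP => x _; rewrite mem_enum.
rewrite -{1}XE => run; rewrite (imm_run_cost run (enum_uniq _)).
by rewrite /kmeans_cost /part_cost /clusters [RHS]big_map.
Qed.

End IMMCleanCuts.

Ltac decide_ifs := repeat match goal with |- context [if ?b then _ else _] =>
  first [have -> : b = true by lra | have -> : b = false by lra] end.

Section Instance.
Variables (R : realType) (N : R).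

Definition data : seq R := [:: -(2 * N); -N; -1; 1; N; 2 * N].
Definition inner (x : R) : bool := (x == -1) || (x == 1).
Definition opt_center (x : R) : R := if inner x then 0 else x.

Lemma mem_data x : x \in data ->
  x = -(2 * N) \/ x = -N \/ x = -1 \/ x = 1 \/ x = N \/ x = 2 * N.
Proof. by rewrite !inE => /orP[|/orP[|/orP[|/orP[|/orP[]]]]] /eqP; tauto. Qed.

Lemma data_uniq : 4 <= N -> uniq data.
Proof. by move=> N_ge4; rewrite /data /= !inE; lra. Qed.

Lemma data_gap x y : 4 <= N -> x \in data -> y \in data -> x != y ->
  4 <= (x - y) ^+ 2 /\ (~~ (inner x && inner y) -> (N - 1) ^+ 2 <= (x - y) ^+ 2).
Proof.
move=> N_ge4 /mem_data[|[|[|[|[|]]]]]-> /mem_data[|[|[|[|[|]]]]]->;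
  rewrite /inner => neq_xy; try (by move: neq_xy; rewrite eqxx); split; try move=> not_inner; nra.
Qed.

Definition merges_inner (lab : R -> 'I_5) : Prop :=
  lab (-1) = lab 1 /\
  {in data &, forall x y, lab x = lab y -> x = y \/ inner x && inner y}.

Lemma centers_merges_inner lab x : 4 <= N -> merges_inner lab -> x \in data ->
  centers data lab (lab x) = opt_center x.
Proof.
move=> N_ge4 [lab_inner lab_inj] Xx; rewrite /centers /opt_center.
have [x_inner | x_outer] := boolP (inner x).
- have -> : [seq z <- data | lab z == lab x] = [seq z <- data | inner z].
    apply: eq_in_filter => z Xz; apply/eqP/idP => [/(lab_inj _ _ Xz Xx) [->|/andP[]] // | z_inner].
    by move: z_inner x_inner; rewrite /inner => /orP[]/eqP-> /orP[]/eqP->.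
  have -> : [seq z <- data | inner z] = [:: -1; 1] by rewrite /data /inner /=; decide_ifs.
  by rewrite /mean !big_cons big_nil addrA addNr add0r mul0r.
- have -> : [seq z <- data | lab z == lab x] = [:: x].
    rewrite -(filter_pred1_uniq (data_uniq N_ge4) Xx); apply: eq_in_filter => z Xz.
    apply/eqP/eqP => [/(lab_inj _ _ Xz Xx) [//|/andP[_ x_inner]] | -> //].
    by rewrite x_inner in x_outer.
  exact: mean_seq1.
Qed.

Lemma kmeans_cost_merges_inner lab : 4 <= N -> merges_inner lab ->
  kmeans_cost data lab = 2.
Proof.
move=> N_ge4 merges; rewrite kmeans_costE.
rewrite {2}/data !big_cons big_nil !centers_merges_inner ?inE ?eqxx ?orbT //.
by rewrite /opt_center /inner; decide_ifs; lra.
Qed.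

Definition lab_opt (x : R) : 'I_5 :=
  if x == -(2 * N) then @Ordinal 5 0 isT else if x == -N then @Ordinal 5 1 isT else
  if inner x then @Ordinal 5 2 isT else if x == N then @Ordinal 5 3 isT
  else @Ordinal 5 4 isT.

Lemma lab_opt_merges_inner : 4 <= N -> merges_inner lab_opt.
Proof.
move=> N_ge4; split; first by rewrite /lab_opt /inner; decide_ifs.
move=> x y /mem_data[|[|[|[|[|]]]]]-> /mem_data[|[|[|[|[|]]]]]->;
  rewrite /lab_opt /inner; decide_ifs => eq_lab; try by [left | right].
all: by move/(congr1 val): eq_lab.
Qed.

Lemma lab_opt_nonempty : 4 <= N -> nonempty_clusters data lab_opt.
Proof.
move=> N_ge4 [[|[|[|[|[|i]]]]] lti] //; apply/hasP.
- by exists (-(2 * N)); rewrite ?inE ?eqxx //= /lab_opt /inner; decide_ifs.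
- by exists (-N); rewrite ?inE ?eqxx ?orbT //= /lab_opt /inner; decide_ifs.
- by exists (-1); rewrite ?inE ?eqxx ?orbT //= /lab_opt /inner; decide_ifs.
- by exists N; rewrite ?inE ?eqxx ?orbT //= /lab_opt /inner; decide_ifs.
- by exists (2 * N); rewrite ?inE ?eqxx ?orbT //= /lab_opt /inner; decide_ifs.
Qed.

Lemma kmeans_cost_data_ge2 (lab : R -> 'I_5) : 4 <= N -> 2 <= kmeans_cost data lab.
Proof.
move=> N_ge4; have [|x [y [Xx Xy neq_xy eq_lab]]] := labelling_has_pair lab (data_uniq N_ge4).
  by rewrite card_ord.
have [gap _] := data_gap N_ge4 Xx Xy neq_xy.
have := kmeans_cost_ge_pair Xx Xy neq_xy eq_lab; lra.
Qed.

Lemma data_cost_opt : 4 <= N -> is_cost_opt 5 data 2.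
Proof.
move=> N_ge4; split=> [|lab _]; last exact: kmeans_cost_data_ge2.
exists lab_opt; split; first exact: lab_opt_nonempty.
exact: kmeans_cost_merges_inner (lab_opt_merges_inner N_ge4).
Qed.

Lemma opt_clustering_merges_inner lab : 4 <= N ->
  is_opt_clustering data lab -> merges_inner lab.
Proof.
move=> N_ge4 [nonempty opt].
have cost_le2 : kmeans_cost data lab <= 2.
  rewrite -(kmeans_cost_merges_inner N_ge4 (lab_opt_merges_inner N_ge4)).
  exact/opt/lab_opt_nonempty.
have lab_inj : {in data &, forall x y, lab x = lab y -> x = y \/ inner x && inner y}.
  move=> x y Xx Xy eq_lab; have [-> | neq_xy] := eqVneq x y; first by left.
  have [both_inner | outer] := boolP (inner x && inner y); first by right.
  have [_ /(_ outer) far] := data_gap N_ge4 Xx Xy neq_xy.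
  by have := kmeans_cost_ge_pair Xx Xy neq_xy eq_lab; nra.
split=> //.
have [|x [y [Xx Xy neq_xy eq_lab]]] := labelling_has_pair lab (data_uniq N_ge4).
  by rewrite card_ord.
have [eq_xy | /andP[x_inner y_inner]] := lab_inj x y Xx Xy eq_lab.
  by rewrite eq_xy eqxx in neq_xy.
move: x_inner y_inner neq_xy eq_lab; rewrite /inner.
by move=> /orP[]/eqP-> /orP[]/eqP->; rewrite ?eqxx // => _ ->.
Qed.

Lemma data_partition_pair P : 4 <= N -> perm_eq (flatten P) data -> (size P < 6)%N ->
  exists2 C, C \in P &
    exists x y, [/\ x \in C, y \in C, x \in data, y \in data & x != y].
Proof.
move=> N_ge4 permP szP.
have [C PC [x [y [Cx Cy neq_xy]]]] := partition_has_pair (data_uniq N_ge4) permP szP.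
have inX z : z \in C -> z \in data by rewrite -(perm_mem permP) => Cz; apply/flattenP; exists C.
by exists C => //; exists x, y; split; rewrite ?inX.
Qed.

Lemma part_cost_data_ge2 P : 4 <= N -> perm_eq (flatten P) data -> (size P < 6)%N ->
  2 <= part_cost P.
Proof.
move=> N_ge4 permP szP.
have [C PC [x [y [Cx Cy Xx Xy neq_xy]]]] := data_partition_pair N_ge4 permP szP.
have [gap _] := data_gap N_ge4 Xx Xy neq_xy.
by have := part_cost_ge_pair PC Cx Cy neq_xy; lra.
Qed.

Definition splits_inner (C : seq R) : bool := ~~ ((-1 \in C) && (1 \in C)).

Lemma part_cost_data_split P : 4 <= N -> perm_eq (flatten P) data -> (size P < 6)%N ->
  all splits_inner P -> (N - 1) ^+ 2 / 2 <= part_cost P.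
Proof.
move=> N_ge4 permP szP /allP splitP.
have [C PC [x [y [Cx Cy Xx Xy neq_xy]]]] := data_partition_pair N_ge4 permP szP.
have outer : ~~ (inner x && inner y).
  apply: contra (splitP C PC); move: neq_xy Cx Cy; rewrite /inner.
  by move=> + + + /andP[/orP[]/eqP xE /orP[]/eqP yE]; rewrite xE yE ?eqxx // => _ -> ->.
have [_ /(_ outer) far] := data_gap N_ge4 Xx Xy neq_xy.
by have := part_cost_ge_pair PC Cx Cy neq_xy; lra.
Qed.

Definition cut_tree : itree R :=
  Node (-(3 * N)) (-(3 * N) / 2) (Leaf R) (Node (-(3 * N) / 2) (- N / 2) (Leaf R)
    (Node (- N / 2) (N / 2) (Leaf R) (Node (N / 2) (3 * N / 2) (Leaf R) (Leaf R)))).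

Lemma data_price : 4 <= N -> price_is 5 data 2 1.
Proof.
move=> N_ge4; split.
  exists cut_tree; split; first by rewrite /cut_tree /=; do !split; lra.
  split=> //; rewrite /price_tree /tree_cost /cut_tree /=; do 4 (decide_ifs; rewrite /=).
  rewrite /part_cost /= !big_cons big_nil !cluster_cost_seq1 cluster_cost_pair; lra.
move=> T _ leaves5; rewrite /price_tree /tree_cost.
have := part_cost_data_ge2 N_ge4 (leaf_part_perm T data).
by rewrite size_leaf_part leaves5 => /(_ isT); lra.
Qed.

Lemma opt_center_inj x y : 4 <= N -> x \in data -> y \in data ->
  opt_center x = opt_center y -> x = y \/ inner x && inner y.
Proof.
move=> N_ge4 /mem_data[|[|[|[|[|]]]]]-> /mem_data[|[|[|[|[|]]]]]->;
  rewrite /opt_center /inner; decide_ifs => eq_c; by [left | right | exfalso; lra].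
Qed.

Lemma centers_inj lab : 4 <= N -> merges_inner lab -> nonempty_clusters data lab ->
  injective (centers data lab).
Proof.
move=> N_ge4 merges nonempty i j.
have [x Xx <-] : exists2 x, x \in data & lab x = i by have /hasP[x ? /eqP] := nonempty i; exists x.
have [y Xy <-] : exists2 y, y \in data & lab y = j by have /hasP[y ? /eqP] := nonempty j; exists y.
rewrite !centers_merges_inner // => /(opt_center_inj N_ge4 Xx Xy) [-> // | /andP[]].
by case: merges => lab_inner _; rewrite /inner => /orP[]/eqP-> /orP[]/eqP->.
Qed.

(* Cut right at the center, except for the inner cluster, whose points -1 and 1
   lie on both sides of its center 0. *)
Definition cut_after (v : R) : R := if v == 0 then 1 else v.

Lemma cut_after_respects a x : 4 <= N -> a \in data -> x \in data ->
  (x <= cut_after (opt_center a)) = (opt_center x <= cut_after (opt_center a)).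
Proof.
move=> N_ge4 /mem_data[|[|[|[|[|]]]]]-> /mem_data[|[|[|[|[|]]]]]->;
  rewrite /cut_after /opt_center /inner; decide_ifs; apply/idP/idP; lra.
Qed.

Lemma cut_after_between a b : 4 <= N -> a \in data -> b \in data ->
  opt_center a < opt_center b ->
  opt_center a <= cut_after (opt_center a) < opt_center b.
Proof.
move=> N_ge4 /mem_data[|[|[|[|[|]]]]]-> /mem_data[|[|[|[|[|]]]]]->;
  rewrite /cut_after /opt_center /inner; decide_ifs; lra.
Qed.

Lemma data_clean_cut lab : 4 <= N -> merges_inner lab -> nonempty_clusters data lab ->
  forall Mu, uniq Mu -> (1 < size Mu)%N ->
  exists2 th, imm_valid (centers data lab) Mu th &
              cut_respects (centers data lab) lab data Mu th.
Proof.
move=> N_ge4 merges nonempty Mu uMu szMu; set c := centers data lab.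
have [i [j [Mi Mj lt_ij]]] : exists i j, [/\ i \in Mu, j \in Mu & c i < c j].
  case: Mu uMu szMu => [|i [|j Mu]] //= /andP[]; rewrite inE negb_or => /andP[neq_ij _] _ _.
  have : c i != c j by apply: contraNneq neq_ij => /centers_inj ->.
  rewrite neq_lt => /orP[lt | lt]; [exists i, j | exists j, i]; by rewrite !inE !eqxx ?orbT.
have [a Xa ai] : exists2 a, a \in data & lab a = i by have /hasP[a ? /eqP] := nonempty i; exists a.
have [b Xb bj] : exists2 b, b \in data & lab b = j by have /hasP[b ? /eqP] := nonempty j; exists b.
have center_opt x : x \in data -> c (lab x) = opt_center x by apply: centers_merges_inner.
move: lt_ij; rewrite -ai -bj !center_opt // => lt_ab.
have /andP[le_a lt_b] := cut_after_between N_ge4 Xa Xb lt_ab.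
exists (cut_after (opt_center a)).
  by apply/andP; split; apply/hasP; [exists i | exists j];
    rewrite // -?ai -?bj center_opt // -?ltNge.
by move=> x Xx _; rewrite center_opt // cut_after_respects.
Qed.

(* The cost of the cut at 0 with the reference centers -N and N. *)
Definition zero_cut_cost : R := 2 * N ^+ 2 + 2 * (N - 1) ^+ 2.

Lemma cost_exkmc_zero lab : 4 <= N -> merges_inner lab ->
  cost_exkmc (centers data lab) data 0 <= zero_cut_cost.
Proof.
move=> N_ge4 merges; set c := centers data lab.
have cut_mem : sqdist_sum [seq x <- data | x <= 0] (c (lab (-N))) +
    sqdist_sum [seq x <- data | ~~ (x <= 0)] (c (lab N)) \in
    [seq sqdist_sum [seq x <- data | x <= 0] (c j) +
         sqdist_sum [seq x <- data | ~~ (x <= 0)] (c l) | j <- enum 'I_5, l <- enum 'I_5].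
  by apply/allpairsP; exists (lab (-N), lab N); rewrite !mem_enum.
apply: le_trans (seqmin_le cut_mem) _.
rewrite /c !centers_merges_inner ?inE ?eqxx ?orbT // /opt_center /inner; decide_ifs.
rewrite /data /=; decide_ifs; rewrite /sqdist_sum !big_cons !big_nil /zero_cut_cost; nra.
Qed.

Definition center_values : seq R := [:: -(2 * N); -N; 0; N; 2 * N].

Lemma opt_center_mem x : 4 <= N -> x \in data -> opt_center x \in center_values.
Proof.
move=> N_ge4 /mem_data[|[|[|[|[|]]]]]->; rewrite /opt_center /inner.
all: by decide_ifs; rewrite /center_values !inE eqxx !(orbT, orTb).
Qed.

Lemma prefix_cost_gt n v w : 4 <= N -> n \in [:: 0; 1; 2; 4; 5; 6]%N ->
  v \in center_values -> w \in center_values ->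
  zero_cut_cost < sqdist_sum (take n data) v + sqdist_sum (drop n data) w.
Proof.
move=> N_ge4; rewrite !inE.
move=> /orP[|/orP[|/orP[|/orP[|/orP[]]]]] /eqP->
  /orP[|/orP[|/orP[|/orP[]]]] /eqP-> /orP[|/orP[|/orP[|/orP[]]]] /eqP->.
all: rewrite /sqdist_sum /zero_cut_cost /= !big_cons !big_nil; nra.
Qed.

Lemma data_cut_prefix th : 4 <= N -> ~~ (-1 <= th < 1) ->
  exists2 n, n \in [:: 0; 1; 2; 4; 5; 6]%N &
    [seq x <- data | x <= th] = take n data /\
    [seq x <- data | ~~ (x <= th)] = drop n data.
Proof.
move=> N_ge4 th_out.
have [lt1 | ge1] := ltP th (-(2 * N)); last have [lt2 | ge2] := ltP th (-N);
  last have [lt3 | ge3] := ltP th (-1); last have [lt5 | ge5] := ltP th N;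
  last have [lt6 | ge6] := ltP th (2 * N).
all: rewrite /data /=; decide_ifs.
all: first [by exists 0%N | by exists 1%N | by exists 2%N | by exists 4%N | by exists 5%N |
                by exists 6%N].
Qed.

Lemma exkmc_best_cut_inner lab th : 4 <= N -> merges_inner lab ->
  nonempty_clusters data lab ->
  (forall th', exkmc_gain (centers data lab) data th' <=
               exkmc_gain (centers data lab) data th) ->
  -1 <= th < 1.
Proof.
move=> N_ge4 merges nonempty max_th; set c := centers data lab.
have c_values j : c j \in center_values.
  have /hasP[x Xx /eqP <-] := nonempty j.
  by rewrite /c centers_merges_inner // opt_center_mem.
apply: contraT => th_out.
have cost_gt : zero_cut_cost < cost_exkmc c data th.
  rewrite /cost_exkmc; have [n n_ok [-> ->]] := data_cut_prefix N_ge4 th_out.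
  apply: seqmin_gt => [|_ /allpairsP[[j l] [_ _ ->]]]; last exact: prefix_cost_gt.
  by rewrite -size_eq0 size_allpairs size_enum_ord.
have := cost_exkmc_zero N_ge4 merges; have := max_th 0; rewrite /exkmc_gain; lra.
Qed.

Lemma exkmc_run_splits_inner k (c : 'I_k -> R) X th F : -1 <= th < 1 ->
  exkmc_run c [:: [seq x <- X | x <= th]; [seq x <- X | ~~ (x <= th)]] F ->
  all splits_inner F.
Proof.
case/andP=> le_th lt_th /exkmc_run_all; apply=> [C a|].
  by apply: contra; rewrite !mem_filter => /andP[/andP[_ ->] /andP[_ ->]].
apply/allP => C; rewrite !inE => /orP[]/eqP->; rewrite /splits_inner !mem_filter le_th //=.
by rewrite leNgt lt_th /= andbF.
Qed.

End Instance.

Theorem theorem6 (R : realType) (m : nat) :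
  exists (k : nat) (X : seq R) (copt : R),
    uniq X /\
    is_cost_opt k X copt /\
    price_is k X copt 1 /\
    (forall lab : R -> 'I_k, is_opt_clustering X lab ->
       ((exists P, imm_run (centers X lab) lab X (enum 'I_k) P) /\
        (forall P, imm_run (centers X lab) lab X (enum 'I_k) P ->
           part_cost P / copt = 1)) /\
       ((exists F, exkmc_run (centers X lab) [:: X] F) /\
        (forall F, exkmc_run (centers X lab) [:: X] F ->
           m%:R <= part_cost F / copt))).
Proof.
pose N : R := m%:R + 4.
have N_ge4 : 4 <= N by rewrite /N lerDr.
exists 5%N, (data N), 2; split; first exact: data_uniq.
split; first exact: data_cost_opt.
split; first exact: data_price.
move=> lab opt; have merges := opt_clustering_merges_inner N_ge4 opt.
have nonempty := opt.1; have clean := data_clean_cut N_ge4 merges nonempty.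
split; split.
- by apply: (imm_run_exists clean) => [x ||]; rewrite ?enum_uniq ?size_enum_ord.
- move=> P /(imm_run_kmeans_cost clean) ->.
  by rewrite kmeans_cost_merges_inner //; lra.
- exact: exkmc_run_exists.
- move=> F run; have [th max_th runF] := exkmc_run_first_split (isT : 1 < 5)%N run.
  have th_inner := exkmc_best_cut_inner N_ge4 merges nonempty max_th.
  have := part_cost_data_split N_ge4 (exkmc_run_partition run) _
    (exkmc_run_splits_inner th_inner runF).
  rewrite (exkmc_run_size run) // => /(_ isT).
  rewrite /N; have := ler0n R m; nra.
Qed.
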